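(* Let $c\ge 2$ and let $G$ be a $c$-edge-colored graph. Then $G$ is PC acyclic of type 3 if and only if $G$ has no PC closed walk.
   Context: A $c$-edge-colored graph is a finite undirected graph in which every edge is assigned a color from $\{1,\dots,c\}$. A walk $W=v_1e_1v_2\dots v_{p-1}e_{p-1}v_p$ is closed if $v_1=v_p$. A walk is properly colored (PC) if $e_i$ and $e_{i+1}$ have different colors for every $i\in\{1,\dots,p-2\}$ and, if the walk is closed, $e_{p-1}$ and $e_1$ also have different colors. An ordering $v_1,\dots,v_n$ of $V(G)$ is of type 3 if for every $i\in[n]$, all edges from $v_i$ to $\{v_{i+1},\dots,v_n\}$ have the same color. $G$ is PC acyclic of type 3 if it has an ordering of its vertices of type 3. *)

From mathcomp Require Import all_boot.
Set Implicit Arguments. Unset Strict Implicit. Unset Printing Implicit Defensive.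

(* A c-edge-colored (finite, simple, undirected) graph on the vertex type T:
   adj is symmetric and irreflexive; col x y is the colour of the edge xy
   (colours are 'I_c, i.e. {0,..,c-1} standing for {1,..,c}); col must be
   symmetric on edges, its values on non-edges are irrelevant. *)
Definition edge_colored_graph (T : finType) (c : nat)
    (adj : rel T) (col : T -> T -> 'I_c) : Prop :=
  [/\ symmetric adj, irreflexive adj &
      forall x y, adj x y -> col x y = col y x].

(* A walk v0 e1 v1 ... is given by its vertex sequence v0 :: s
   (in a simple graph edges are determined by consecutive vertices). *)
Definition walk (T : finType) (adj : rel T) (v0 : T) (s : seq T) : bool :=
  path adj v0 s.

Definition closed_walk (T : finType) (adj : rel T) (v0 : T) (s : seq T) : bool :=
  [&& walk adj v0 s, s != [::] & last v0 s == v0].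

Definition walk_colors (T : finType) (c : nat) (col : T -> T -> 'I_c)
    (v0 : T) (s : seq T) : seq 'I_c := pairmap col v0 s.

Definition PC_closed_walk (T : finType) (c : nat) (adj : rel T)
    (col : T -> T -> 'I_c) (v0 : T) (s : seq T) : Prop :=
  closed_walk adj v0 s /\
  let cs := walk_colors col v0 s in
  (forall (i : nat) (d : 'I_c), i.+1 < size cs -> nth d cs i != nth d cs i.+1) /\
  (forall d : 'I_c, last d cs != head d cs).

Definition type3_ordering (T : finType) (c : nat) (adj : rel T)
    (col : T -> T -> 'I_c) (ord : seq T) : Prop :=
  [/\ uniq ord, (forall x, x \in ord) &
      forall (x0 : T) (i j k : nat), i < j -> i < k -> j < size ord -> k < size ord ->
        adj (nth x0 ord i) (nth x0 ord j) -> adj (nth x0 ord i) (nth x0 ord k) ->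
        col (nth x0 ord i) (nth x0 ord j) = col (nth x0 ord i) (nth x0 ord k)].

Definition PC_acyclic_type3 (T : finType) (c : nat) (adj : rel T)
    (col : T -> T -> 'I_c) : Prop :=
  exists ord : seq T, type3_ordering adj col ord.

From mathcomp Require Import all_boot.

Set Implicit Arguments.
Unset Strict Implicit.
Unset Printing Implicit Defensive.

(* If an ordering is of type 3, the vertex of a closed walk W that comes first
   in the ordering has both of its W-neighbours later in the ordering, so the
   two edges of W at that vertex have the same colour and W is not PC.
   Conversely, if every vertex of a nonempty vertex set S sends edges of two
   different colours into S, then a walk inside S can always be continued by
   an edge whose colour differs from that of the previous edge; by finiteness
   it eventually repeats an edge, which yields a PC closed walk.  So without PC
   closed walks every nonempty S has a vertex whose edges into S all share one
   colour, and removing such vertices one at a time gives an ordering of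
   type 3. *)

Lemma iter_eventually_periodic (X : finType) (f : X -> X) (x : X) :
  exists i k, 0 < k /\ iter k f (iter i f x) = iter i f x.
Proof.
have /trajectP[i lt_i_n Ei] := looping_order f x.
exists i, (order f x - i); split; first by rewrite subn_gt0.
by rewrite -iterD subnK ?(ltnW lt_i_n).
Qed.

Section PCClosedWalks.

Variables (T : finType) (c : nat) (adj : rel T) (col : T -> T -> 'I_c).

Definition monochromatic_at (pT : predType T) (A : pT) (v : T) : bool :=
  [forall y in A, forall z in A, adj v y ==> adj v z ==> (col v y == col v z)].

Lemma monochromatic_atP (pT : predType T) (A : pT) v :
  reflect (forall y z, y \in A -> z \in A -> adj v y -> adj v z -> col v y = col v z)
          (monochromatic_at A v).
Proof.
apply: (iffP forall_inP) => [mono y z yA zA vy vz | mono y yA].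
  by have /forall_inP/(_ z zA) := mono y yA; rewrite vy vz => /eqP.
by apply/forall_inP => z zA; apply/implyP => vy; apply/implyP => vz; rewrite (mono y z).
Qed.

Lemma monochromatic_atS (pT pU : predType T) (A : pT) (B : pU) v :
  {subset A <= B} -> monochromatic_at B v -> monochromatic_at A v.
Proof.
move=> sAB /monochromatic_atP mono; apply/monochromatic_atP => y z yA zA.
exact: mono (sAB y yA) (sAB z zA).
Qed.

Lemma not_monochromatic_exit (pT : predType T) (A : pT) v (d : 'I_c) :
  ~~ monochromatic_at A v -> exists2 w, w \in A & adj v w && (col v w != d).
Proof.
move=> nmono; apply/exists_inP; apply: contraR nmono => /exists_inPn none.
apply/monochromatic_atP => y z yA zA vy vz.
by move: (none y yA) (none z zA); rewrite vy vz /= !negbK => /eqP-> /eqP->.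
Qed.

Lemma closed_walk_mem_start v0 s : closed_walk adj v0 s -> v0 \in s.
Proof.
case/and3P=> _ s_nil /eqP last_s.
by rewrite -last_s -nth_last mem_nth // ltn_predL lt0n size_eq0.
Qed.

Hypotheses (adj_sym : symmetric adj) (adj_irr : irreflexive adj)
  (col_sym : forall x y, adj x y -> col x y = col y x).

Lemma PC_closed_walk_cyclic v0 s i :
  PC_closed_walk adj col v0 s -> i < size s ->
  let w := v0 :: s in let j := i.+1 %% size s in
  nth v0 w j = nth v0 s i /\ col (nth v0 w i) (nth v0 s i) != col (nth v0 w j) (nth v0 s j).
Proof.
move=> [/and3P[_ s_nil /eqP last_s] [PC_next PC_last]] lt_i w j.
have lt_j : j < size s by rewrite ltn_mod lt0n size_eq0.
rewrite -!(nth_pairmap v0 (col v0 v0) col) //.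
have [lt_i1|ge_i1] := ltnP i.+1 (size s).
  by rewrite /j modn_small //; split => //; apply: PC_next; rewrite size_pairmap.
have Ei : i.+1 = size s by apply/anti_leq; rewrite lt_i ge_i1.
rewrite /j Ei modnn; split; first by rewrite -[i]/(i.+1.-1) Ei nth_last last_s.
have := PC_last (col v0 v0).
by rewrite -nth0 -nth_last /walk_colors size_pairmap -Ei eq_sym.
Qed.

Lemma PC_closed_walk_not_monochromatic v0 s u :
  PC_closed_walk adj col v0 s -> u \in s -> ~~ monochromatic_at s u.
Proof.
move=> pc us; have [closed _] := pc; have v0s := closed_walk_mem_start closed.
case/and3P: closed => walk_s _ _.
have lt_i : index u s < size s by rewrite index_mem.
have [] := PC_closed_walk_cyclic pc lt_i; rewrite nth_index //.
set i := index u s; set j := _ %% _; set a := nth v0 (v0 :: s) i; set b := nth v0 s j.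
move=> Ej neq; have lt_j : j < size s by rewrite ltn_mod (leq_ltn_trans _ lt_i).
have walk_adj k : k < size s -> adj (nth v0 (v0 :: s) k) (nth v0 s k) by apply/pathP.
have au : adj a u by rewrite -[u](nth_index v0 us) walk_adj.
have ub : adj u b by rewrite -Ej walk_adj.
have a_s : a \in s.
  by have := mem_nth v0 (ltnW lt_i : i < size (v0 :: s)); rewrite -/a inE => /predU1P[->|].
apply/negP => /monochromatic_atP mono; move/negP: neq; apply.
rewrite col_sym // (mono a b) ?Ej //; first exact: mem_nth.
by rewrite adj_sym.
Qed.

Lemma PC_closed_walk_of_arcs (g : nat -> T * T) k :
  0 < k -> g k = g 0 ->
  (forall m, adj (g m).1 (g m).2) ->
  (forall m, (g m.+1).1 = (g m).2) ->
  (forall m, col (g m.+1).1 (g m.+1).2 != col (g m).1 (g m).2) ->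
  PC_closed_walk adj col (g 0).1 (mkseq (fun m => (g m).2) k).
Proof.
move=> k_gt0 g_per g_adj g_chain g_col; set v0 := (g 0).1; set s := mkseq _ k.
have walk_nth m : m <= k -> nth v0 (v0 :: s) m = (g m).1.
  by case: m => [|m] //= lt_m; rewrite nth_mkseq // g_chain.
have col_nth m d : m < k -> nth d (walk_colors col v0 s) m = col (g m).1 (g m).2.
  move=> lt_m; rewrite /walk_colors (nth_pairmap v0) ?size_mkseq //.
  by rewrite (walk_nth _ (ltnW lt_m)) nth_mkseq.
split; first (apply/and3P; split).
- apply/(pathP v0) => m; rewrite size_mkseq => lt_m.
  by rewrite (walk_nth _ (ltnW lt_m)) nth_mkseq.
- by rewrite -size_eq0 size_mkseq -lt0n.
- by rewrite (last_nth v0) size_mkseq walk_nth // g_per.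
split=> [m d|d].
  rewrite size_pairmap size_mkseq => lt_m1.
  by rewrite !col_nth ?(ltnW lt_m1) // eq_sym g_col.
rewrite -nth0 -nth_last size_pairmap size_mkseq !col_nth ?prednK ?ltn_predL //.
by have := g_col k.-1; rewrite prednK // g_per eq_sym.
Qed.

Lemma PC_closed_walk_of_nowhere_monochromatic (S : {set T}) x :
  x \in S -> {in S, forall v, ~~ monochromatic_at S v} ->
  exists v0 s, PC_closed_walk adj col v0 s.
Proof.
move=> xS nmono.
have /fin_all_exists[next next_ok] : forall p : T * T, exists w, p.2 \in S ->
    [&& w \in S, adj p.2 w & col p.2 w != col p.2 p.1].
  move=> p; have [p2S|] := boolP (p.2 \in S); last by exists x.
  have [w wS /andP[p2w neq]] := not_monochromatic_exit (col p.2 p.1) (nmono _ p2S).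
  by exists w; rewrite wS p2w.
pose step p := (p.2, next p).
pose arc p := (p.2 \in S) && adj p.1 p.2.
have arc_step p : arc p -> arc (step p).
  by case/andP=> p2S _; case/and3P: (next_ok p p2S) => ? ? _; apply/andP.
have [y yS /andP[xy _]] := not_monochromatic_exit (col x x) (nmono x xS).
have arc_iter m : arc (iter m step (x, y)).
  by elim: m => [|m IH]; [apply/andP | exact: arc_step].
have [i [k [k_gt0 per]]] := iter_eventually_periodic step (x, y).
pose g m := iter m step (iter i step (x, y)).
have g_arc m : arc (g m) by rewrite /g -iterD arc_iter.
exists (g 0).1, (mkseq (fun m => (g m).2) k).
apply: PC_closed_walk_of_arcs => // m; first by case/andP: (g_arc m).
case/andP: (g_arc m) => /next_ok/and3P[_ _ neq] gm_adj.
by rewrite (col_sym gm_adj).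
Qed.

Lemma no_PC_closed_walk_monochromatic :
  ~ (exists v0 s, PC_closed_walk adj col v0 s) ->
  forall (S : {set T}) x, x \in S -> exists2 v, v \in S & monochromatic_at S v.
Proof.
move=> noPC S x xS; apply/exists_inP/contraT => /exists_inPn nmono.
by case: noPC; apply: PC_closed_walk_of_nowhere_monochromatic xS nmono.
Qed.

Lemma type3_ordering_monochromatic ord (pT : predType T) (A : pT) x :
  type3_ordering adj col ord -> x \in A -> exists2 u, u \in A & monochromatic_at A u.
Proof.
case=> _ ord_all ord_col xA.
have [u uA u_min] := @arg_minnP T x [pred y | y \in A] (index^~ ord) xA.
exists u => //; apply/monochromatic_atP.
have later w : w \in A -> adj u w -> index u ord < index w ord.
  move=> wA uw; rewrite ltn_neqAle u_min // andbT.
  apply: contraTneq uw => /(congr1 (nth u ord)); rewrite !nth_index // => ->.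
  by rewrite adj_irr.
move=> y z yA zA uy uz; have := ord_col u (index u ord) (index y ord) (index z ord).
by rewrite !nth_index ?index_mem //; apply; rewrite ?later.
Qed.

Lemma type3_ordering_no_PC_closed_walk ord :
  type3_ordering adj col ord -> ~ exists v0 s, PC_closed_walk adj col v0 s.
Proof.
move=> type3 [v0 [s pc]]; have [closed _] := pc.
have [u us mono] := type3_ordering_monochromatic type3 (closed_walk_mem_start closed).
by have := PC_closed_walk_not_monochromatic pc us; rewrite mono.
Qed.

Fixpoint monochromatic_later (ord : seq T) : bool :=
  if ord is v :: ord' then monochromatic_at ord' v && monochromatic_later ord' else true.

Lemma monochromatic_later_nth ord x0 i j k :
  monochromatic_later ord -> i < j -> i < k -> j < size ord -> k < size ord ->
  adj (nth x0 ord i) (nth x0 ord j) -> adj (nth x0 ord i) (nth x0 ord k) ->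
  col (nth x0 ord i) (nth x0 ord j) = col (nth x0 ord i) (nth x0 ord k).
Proof.
elim: ord i j k => //= v ord IH [|i] [|j] [|k] //= /andP[/monochromatic_atP mono later].
  by move=> _ _ lt_j lt_k; apply: mono; apply: mem_nth.
by rewrite !ltnS; exact: IH.
Qed.

Lemma monochromatic_later_exists :
  (forall (S : {set T}) x, x \in S -> exists2 v, v \in S & monochromatic_at S v) ->
  forall S : {set T}, exists ord, [/\ uniq ord, ord =i S & monochromatic_later ord].
Proof.
move=> has_mono S; have [n] := ubnP #|S|; elim: n S => // n IH S.
rewrite ltnS => le_S; have [->|[x xS]] := set_0Vmem S.
  by exists [::]; split => // y; rewrite inE.
have [v vS mono] := has_mono S x xS.
have [|ord [ord_uniq ord_S later]] := IH (S :\ v).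
  by move: le_S; rewrite (cardsD1 v) vS.
exists (v :: ord); split=> [|y|] /=.
- by rewrite ord_uniq ord_S !inE eqxx.
- by rewrite inE ord_S !inE; case: eqP => // ->.
- rewrite later andbT; apply: monochromatic_atS mono => y.
  by rewrite ord_S => /setD1P[].
Qed.

End PCClosedWalks.

Theorem mainTheorem4 (c : nat) (T : finType) (adj : rel T) (col : T -> T -> 'I_c) :
  2 <= c -> edge_colored_graph adj col ->
  PC_acyclic_type3 adj col <->
  ~ (exists (v0 : T) (s : seq T), PC_closed_walk adj col v0 s).
Proof.
move=> _ [adj_sym adj_irr col_sym]; split.
  by case=> ord; apply: type3_ordering_no_PC_closed_walk.
move=> noPC.
have has_mono := no_PC_closed_walk_monochromatic col_sym noPC.
have [ord [ord_uniq ord_T later]] := monochromatic_later_exists has_mono [set: T].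
exists ord; split=> // [x|x0 i j k]; first by rewrite ord_T inE.
exact: monochromatic_later_nth.
Qed.
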